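(* Let $\eta\in\Upsilon_{z_0}$ and let $(u_M,M)$ and $(v_M,M)$ denote the states of $\widetilde{\mathbf M}_\eta$ and $\widehat{\mathbf M}_\eta$, respectively, at time $M$. Then, for each $M$, $v_M$ has the same distribution as the unique element of $\widehat W$ lying in the coset $u_MW=\{u_Mw:w\in W\}$.
   Context: Let $\Phi$ be a finite irreducible crystallographic root system with simple roots $\{\alpha_i:i\in I\}$, highest root $\theta$, Weyl group $W$ and affine Weyl group $\widetilde W$ with simple reflections $s_i$, $i\in\widetilde I=\{0\}\sqcup I$; $Q^\vee\subseteq V^*$ is the coroot lattice. $\mathcal H_{\widetilde W}=\{\mathrm H_\beta^k=\{\gamma\in V^*:\gamma(\beta)=k\}:\beta\in\Phi^+,k\in\mathbb Z\}$. $\widetilde W$ acts faithfully on $V^*$ on the right, $s_i$ ($i\in I$) reflecting through $\mathrm H^0_{\alpha_i}$ and $s_0$ through $\mathrm H^1_\theta$; $W=\langle s_i:i\in I\rangle$. $\mathcal C=\{\gamma:\gamma(\alpha_i)\ge0\ \forall i\in I\}$, $\mathcal A=\{\gamma\in\mathcal C:\gamma(\theta)\le1\}$, $u\mapsto\mathcal A u$ bijects $\widetilde W$ onto alcoves; $\mathrm H^{(u,s_i)}$ separates $\mathcal A u$ and $\mathcal A s_iu$. $\widehat W=\{w\in\widetilde W:\mathcal A w\subseteq\mathcal C\}$ (each coset $uW$ contains exactly one element of $\widehat W$). Fix $z_0$ in the interior of $\mathcal A$ and $p\in(0,1)$. $\Upsilon_{z_0}$: the set of $\eta\in Q^\vee\setminus\{0\}$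 whose ray from $z_0$ avoids intersections of two or more hyperplanes of $\mathcal H_{\widetilde W}$. For such $\eta$, if the ray passes successively through $\mathcal A u_0=\mathcal A,\mathcal A u_1,\dots$, define $i_j$ by $u_{j+1}=s_{i_j}u_j$; the sequence is periodic with period $N_\eta$. $\widetilde{\mathbf M}_\eta$ is the Markov chain on $\widetilde W\times\mathbb Z/N_\eta\mathbb Z$ started at $(\mathbbm 1,0)$: from $(u,k)$, if $\mathrm H^{(u,s_{i_k})}$ does not separate $\mathcal A u$ from $\mathcal A$, go to $(s_{i_k}u,k+1)$ with probability $p$, else to $(u,k+1)$ with probability $1-p$; if it does separate them, go to $(u,k+1)$. $\widehat{\mathbf M}_\eta$ on $\widehat W\times\mathbb Z/N_\eta\mathbb Z$ is identical except that the move to $(s_{i_k}u,k+1)$ is only allowed (with probability $p$) when also $\mathcal A s_{i_k}u\subseteq\mathcal C$. *)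

From HB Require Import structures.
From mathcomp Require Import all_boot all_order all_algebra.
From mathcomp Require Import boolp classical_sets reals.

Set Implicit Arguments.
Unset Strict Implicit.
Unset Printing Implicit Defensive.

Import Order.TTheory GRing.Theory Num.Theory.
Local Open Scope ring_scope.
Local Open Scope classical_set_scope.

Section Defs.
Variable R : realType.
Variable n : nat.
Local Notation V := 'rV[R]_n.

(** Euclidean pairing; V and V* are both identified with R^n. *)
Definition rdot (x y : V) : R := \sum_(i < n) x 0 i * y 0 i.

Definition coroot (b : V) : V := (2 / rdot b b) *: b.

Definition refl (b : V) (k : R) (g : V) : V := g - (rdot g b - k) *: coroot b.

Definition is_root_system (Phi : seq V) : Prop :=
  [/\ (forall a, a \in Phi -> a != 0),
      (forall v : V, exists c : 'I_(size Phi) -> R,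
          v = \sum_(j < size Phi) c j *: Phi`_j),
      (forall a b, a \in Phi -> b \in Phi -> refl a 0 b \in Phi),
      (forall a b, a \in Phi -> b \in Phi ->
          exists z : int, 2 * rdot b a / rdot a a = z%:~R) &
      (forall a b (c : R), a \in Phi -> b \in Phi -> b = c *: a ->
          c = 1 \/ c = -1)].

Definition irreducible_rs (Phi : seq V) : Prop :=
  Phi <> [::] /\
  forall P : V -> Prop,
    (exists2 a, a \in Phi & P a) -> (exists2 b, b \in Phi & ~ P b) ->
    exists a b, [/\ a \in Phi, b \in Phi, P a, ~ P b & rdot a b != 0].

Definition zcomb (alpha : 'I_n -> V) (c : 'I_n -> int) : V :=
  \sum_(i < n) (c i)%:~R *: alpha i.

Definition is_base (Phi : seq V) (alpha : 'I_n -> V) : Prop :=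
  [/\ (forall i, alpha i \in Phi),
      (forall c : 'I_n -> R, \sum_(i < n) c i *: alpha i = 0 -> forall i, c i = 0) &
      (forall b, b \in Phi -> exists c : 'I_n -> int,
          b = zcomb alpha c /\ ((forall i, 0 <= c i) \/ (forall i, c i <= 0)))].

Definition pos_root (Phi : seq V) (alpha : 'I_n -> V) (b : V) : Prop :=
  b \in Phi /\ exists c : 'I_n -> int, b = zcomb alpha c /\ forall i, 0 <= c i.

Definition is_highest_root (Phi : seq V) (alpha : 'I_n -> V) (theta : V) : Prop :=
  pos_root Phi alpha theta /\
  forall b, pos_root Phi alpha b ->
    exists d : 'I_n -> int, theta - b = zcomb alpha d /\ forall i, 0 <= d i.

Definition hyp (b : V) (k : R) : set V := [set g | rdot g b = k].

Definition coroot_lattice (alpha : 'I_n -> V) (eta : V) : Prop :=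
  exists c : 'I_n -> int, eta = \sum_(i < n) (c i)%:~R *: coroot (alpha i).

Definition Cone (alpha : 'I_n -> V) : set V :=
  [set g | forall i, 0 <= rdot g (alpha i)].

Definition Afund (alpha : 'I_n -> V) (theta : V) : set V :=
  [set g | (forall i, 0 <= rdot g (alpha i)) /\ rdot g theta <= 1].

(** Affine Weyl group: words over I~ = {0} + I, encoded as option 'I_n
    (None = 0).  The word [:: a1; ...; ak] stands for s_a1 ... s_ak, acting on
    the right: g (s_a1 ... s_ak) = (...(g s_a1)...) s_ak. *)
Definition sgen (alpha : 'I_n -> V) (theta : V) (i : option 'I_n) : V -> V :=
  match i with None => refl theta 1 | Some j => refl (alpha j) 0 end.

Definition act (alpha : 'I_n -> V) (theta : V) (u : seq (option 'I_n)) (g : V) : V :=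
  foldl (fun h i => sgen alpha theta i h) g u.

(** equality in the affine Weyl group (the action is faithful) *)
Definition weq alpha theta (u v : seq (option 'I_n)) : Prop :=
  forall g, act alpha theta u g = act alpha theta v g.

Definition alcove alpha theta (u : seq (option 'I_n)) : set V :=
  act alpha theta u @` Afund alpha theta.

Definition wall alpha theta (i : option 'I_n) : set V :=
  match i with None => hyp theta 1 | Some j => hyp (alpha j) 0 end.

(** H^{(u,s_i)} : the hyperplane separating A u and A s_i u ( = (wall_i) u ) *)
Definition Hsep alpha theta (u : seq (option 'I_n)) (i : option 'I_n) : set V :=
  act alpha theta u @` wall alpha theta i.

Definition separates (H X Y : set V) : Prop :=
  exists (b : V) (c : R), [/\ b != 0, H = [set g | rdot g b = c],
    X `<=` [set g | rdot g b <= c] & Y `<=` [set g | c <= rdot g b]].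

Definition in_Upsilon (Phi : seq V) alpha (z0 eta : V) : Prop :=
  [/\ coroot_lattice alpha eta, eta != 0 &
      forall t : R, 0 <= t -> forall b b' (k k' : int),
        pos_root Phi alpha b -> pos_root Phi alpha b' ->
        hyp b k%:~R <> hyp b' k'%:~R ->
        ~ (hyp b k%:~R (z0 + t *: eta) /\ hyp b' k'%:~R (z0 + t *: eta))].

Fixpoint uword (i : nat -> option 'I_n) (j : nat) : seq (option 'I_n) :=
  if j is j'.+1 then i j' :: uword i j' else [::].

Definition ray_alcove_seq alpha theta (z0 eta : V) (i : nat -> option 'I_n) : Prop :=
  exists tt : nat -> R,
    [/\ tt 0%N = 0, (forall j, tt j < tt j.+1),
        (forall t, 0 <= t -> exists j, tt j <= t <= tt j.+1) &
        (forall j t, tt j <= t <= tt j.+1 ->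
           alcove alpha theta (uword i j) (z0 + t *: eta))].

Definition is_min_period (i : nat -> option 'I_n) (N : nat) : Prop :=
  [/\ (0 < N)%N, (forall j, i (j + N)%N = i j) &
      forall N', (0 < N')%N -> (forall j, i (j + N')%N = i j) -> (N <= N')%N].

(** x is the element of What lying in the coset u W *)
Definition is_hat_rep alpha theta (u x : seq (option 'I_n)) : Prop :=
  alcove alpha theta x `<=` Cone alpha /\
  exists w : seq 'I_n, weq alpha theta x (u ++ map Some w).

Definition state := (seq (option 'I_n) * nat)%type.

Definition tilde_kernel alpha theta (i : nat -> option 'I_n) (N : nat) (p : R)
    (x : state) : seq (state * R) :=
  let u := x.1 in let s := i x.2 in let k' := (x.2.+1 %% N)%N in
  if `[< separates (Hsep alpha theta u s) (alcove alpha theta u) (Afund alpha theta) >]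
  then [:: ((u, k'), 1)]
  else [:: ((s :: u, k'), p); ((u, k'), 1 - p)].

Definition hat_kernel alpha theta (i : nat -> option 'I_n) (N : nat) (p : R)
    (x : state) : seq (state * R) :=
  let u := x.1 in let s := i x.2 in let k' := (x.2.+1 %% N)%N in
  if `[< ~ separates (Hsep alpha theta u s) (alcove alpha theta u) (Afund alpha theta)
         /\ alcove alpha theta (s :: u) `<=` Cone alpha >]
  then [:: ((s :: u, k'), p); ((u, k'), 1 - p)]
  else [:: ((u, k'), 1)].

End Defs.

(** Generic finitely-branching Markov chain: law at time M as a weighted list
    of states (path expansion). *)
Section Markov.
Variable R : realType.
Variable S : Type.

Definition mstep (K : S -> seq (S * R)) (d : seq (S * R)) : seq (S * R) :=
  flatten [seq [seq (y.1, x.2 * y.2) | y <- K x.1] | x <- d].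

Definition mdist (K : S -> seq (S * R)) (s0 : S) (M : nat) : seq (S * R) :=
  iter M (mstep K) [:: (s0, 1)].

Definition mprob (d : seq (S * R)) (P : S -> Prop) : R :=
  \sum_(x <- d) (if `[< P x.1 >] then x.2 else 0).
End Markov.

From Pilot Require Import Defs.
From HB Require Import structures.
From mathcomp Require Import all_boot all_order all_algebra.
From mathcomp Require Import boolp classical_sets reals.
From mathcomp Require Import ring lra zify.
Import Order.TTheory GRing.Theory Num.Theory.
Local Open Scope ring_scope.
Local Open Scope classical_set_scope.

Set Implicit Arguments.
Unset Strict Implicit.
Unset Printing Implicit Defensive.

(** The map u |-> û sending an element of the affine Weyl group to the
  representative of uW in What lumps the chain M~ onto M^.  Let s = s_{i_k}.
  If A s û lies in C, then s û represents s u W, and H^{(u,s)} separates A u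
  from A exactly when H^{(û,s)} separates A û from A: the two hyperplanes
  H_β^m and H_{wβ}^m differ by some w in W, which keeps the level m, and for
  m <> 0 separation from A only asks on which side of the hyperplane the
  alcove lies.  If A s û does not lie in C, then A û and A s û are adjacent
  across a wall of the Weyl chamber, so s u lies in uW: moving or not, the
  tilde chain projects to û, matching the hat chain, which stays put.  Uniqueness
  of the representative rests on the fact that the only element of W sending
  a point of the open chamber into C is the identity. *)

Section Pairing.
Variables (R : realType) (n : nat).
Local Notation V := 'rV[R]_n.

Lemma rdotC (x y : V) : rdot x y = rdot y x.
Proof. by apply: eq_bigr => i _; rewrite mulrC. Qed.

Lemma rdotDl (x y z : V) : rdot (x + y) z = rdot x z + rdot y z.
Proof. by rewrite /rdot -big_split; apply: eq_bigr => i _; rewrite !mxE mulrDl. Qed.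

Lemma rdotZl a (x y : V) : rdot (a *: x) y = a * rdot x y.
Proof. by rewrite /rdot mulr_sumr; apply: eq_bigr => i _; rewrite !mxE mulrA. Qed.

Lemma rdotNl (x y : V) : rdot (- x) y = - rdot x y.
Proof. by rewrite -scaleN1r rdotZl mulN1r. Qed.

Lemma rdotBl (x y z : V) : rdot (x - y) z = rdot x z - rdot y z.
Proof. by rewrite rdotDl rdotNl. Qed.

Lemma rdot0l (y : V) : rdot 0 y = 0.
Proof. by rewrite -(scale0r 0) rdotZl mul0r. Qed.

Lemma rdotDr (x y z : V) : rdot z (x + y) = rdot z x + rdot z y.
Proof. by rewrite rdotC rdotDl !(rdotC z). Qed.

Lemma rdotZr a (x y : V) : rdot y (a *: x) = a * rdot y x.
Proof. by rewrite rdotC rdotZl rdotC. Qed.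

Lemma rdotNr (x y : V) : rdot y (- x) = - rdot y x.
Proof. by rewrite rdotC rdotNl rdotC. Qed.

Lemma rdotBr (x y z : V) : rdot z (x - y) = rdot z x - rdot z y.
Proof. by rewrite rdotDr rdotNr. Qed.

Lemma rdot0r (y : V) : rdot y 0 = 0.
Proof. by rewrite rdotC rdot0l. Qed.

Lemma rdot_eq0 (x : V) : rdot x x = 0 -> x = 0.
Proof.
move=> /eqP; rewrite psumr_eq0 => [/allP H|i _]; last by rewrite -expr2 sqr_ge0.
apply/rowP => i; rewrite mxE; have := H i (mem_index_enum i).
by rewrite /= mulf_eq0 orbb => /eqP.
Qed.

Lemma rdot_gt0 (x : V) : x != 0 -> 0 < rdot x x.
Proof.
move=> nz; have ge0 : 0 <= rdot x x.
  by apply: sumr_ge0 => i _; rewrite -expr2 sqr_ge0.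
rewrite lt_def ge0 andbT; apply/eqP => /rdot_eq0 x0.
by rewrite x0 eqxx in nz.
Qed.

Lemma rdot_neq0 (x : V) : x != 0 -> rdot x x != 0.
Proof. by move/rdot_gt0/lt0r_neq0. Qed.

Lemma rdot_inj (a b : V) : (forall y, rdot y a = rdot y b) -> a = b.
Proof.
move=> H; apply/eqP; rewrite -subr_eq0; apply/eqP/rdot_eq0.
by rewrite rdotBr H subrr.
Qed.

Lemma rdot_coroot (b c : V) : rdot (coroot b) c = 2 * rdot b c / rdot b b.
Proof. by rewrite /coroot rdotZl mulrAC mulrC mulrA. Qed.

Lemma rdot_coroot_self (b : V) : b != 0 -> rdot (coroot b) b = 2.
Proof. by move=> nz; rewrite rdot_coroot mulfK // rdot_neq0. Qed.

Lemma rdot_refl b k (g c : V) :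
  rdot (refl b k g) c = rdot g c - (rdot g b - k) * rdot (coroot b) c.
Proof. by rewrite /refl rdotBl rdotZl. Qed.

Lemma rdot_refl_self b k (g : V) : b != 0 ->
  rdot (refl b k g) b - k = - (rdot g b - k).
Proof. by move=> nz; rewrite rdot_refl rdot_coroot_self //; ring. Qed.

Lemma reflK (b : V) k : b != 0 -> involutive (refl b k).
Proof.
move=> nz g; rewrite {1}/refl rdot_refl_self //.
by rewrite /refl scaleNr opprK subrK.
Qed.

Lemma refl_affine (b g : V) k : refl b k g = refl b 0 g + k *: coroot b.
Proof. by rewrite /refl subr0 scalerBl opprB addrCA addrC. Qed.

Lemma refl0E (a b : V) : refl a 0 b = b - rdot (coroot a) b *: a.
Proof.
rewrite /refl subr0 /coroot scalerA rdot_coroot rdotC; congr (b - _ *: a).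
by rewrite mulrA [_ * 2]mulrC.
Qed.

Lemma rdot_refl0 b (g c : V) : rdot (refl b 0 g) c = rdot g (refl b 0 c).
Proof.
rewrite rdot_refl (rdotC g (refl b 0 c)) rdot_refl !rdot_coroot !subr0.
rewrite (rdotC c g) (rdotC c b) (rdotC g b); ring.
Qed.

Lemma rdot_refl0_refl0 b (g h : V) : b != 0 ->
  rdot (refl b 0 g) (refl b 0 h) = rdot g h.
Proof. by move=> nz; rewrite rdot_refl0 reflK. Qed.

Lemma refl0D b (g h : V) : refl b 0 (g + h) = refl b 0 g + refl b 0 h.
Proof. by rewrite /refl rdotDl !subr0 scalerDl opprD addrACA. Qed.

Lemma refl0Z b a (g : V) : refl b 0 (a *: g) = a *: refl b 0 g.
Proof. by rewrite /refl rdotZl !subr0 scalerBr -scalerA. Qed.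

Lemma refl0B b (g h : V) : refl b 0 (g - h) = refl b 0 g - refl b 0 h.
Proof. by rewrite refl0D -!scaleN1r refl0Z. Qed.

Lemma refl0_self (b : V) : b != 0 -> refl b 0 b = - b.
Proof.
move=> nz; rewrite /refl subr0.
have -> : rdot b b *: coroot b = 2 *: b.
  by rewrite /coroot scalerA mulrC divfK // rdot_neq0.
by rewrite scalerDl scale1r opprD addrA subrr sub0r.
Qed.

Lemma refl0_coroot_self (b : V) : b != 0 -> refl b 0 (coroot b) = - coroot b.
Proof. by move=> bz; rewrite /coroot refl0Z refl0_self // scalerN. Qed.

Lemma refl0_eq0 b (g : V) : b != 0 -> (refl b 0 g == 0) = (g == 0).
Proof.
move=> nz; have r00 : refl b 0 (0 : V) = 0.
  by rewrite /refl rdot0l subrr scale0r subr0.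
apply/eqP/eqP => [g0|->//]; by rewrite -(reflK 0 nz g) g0.
Qed.

Lemma reflZ (b : V) a k : a != 0 -> b != 0 -> refl (a *: b) (a * k) =1 refl b k.
Proof.
move=> az bz g; have bb := rdot_neq0 bz.
rewrite /refl /coroot !scalerA !rdotZl !rdotZr; congr (g - _ *: _).
by field; apply/andP.
Qed.

Lemma refl0_coroot (a b : V) : a != 0 -> refl a 0 (coroot b) = coroot (refl a 0 b).
Proof. by move=> az; rewrite /coroot refl0Z rdot_refl0_refl0. Qed.

Lemma refl0_refl (a b : V) k (g : V) : a != 0 ->
  refl a 0 (refl b k g) = refl (refl a 0 b) k (refl a 0 g).
Proof.
move=> az; rewrite [refl b k g]/refl refl0B refl0Z refl0_coroot //.
by rewrite [RHS]/refl rdot_refl0_refl0.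
Qed.

Lemma refl_eq_refl0 (a b : V) k : a != 0 -> b != 0 ->
  (forall y, rdot (refl b k y) a = - rdot y a) -> refl b k =1 refl a 0.
Proof.
move=> az bz H; set c := rdot (coroot b) a.
have H1 y : (rdot y b - k) * c = 2 * rdot y a.
  by have := H y; rewrite rdot_refl -/c => h; lra.
have cz : c != 0.
  apply/eqP => c0; have := H1 a; rewrite c0 mulr0 => /esym/eqP.
  by rewrite mulf_eq0 pnatr_eq0 /= (negbTE (rdot_neq0 az)).
have k0 : k = 0.
  have := H1 0; rewrite !rdot0l mulr0 => /eqP; rewrite mulf_eq0 (negbTE cz) orbF.
  by rewrite sub0r oppr_eq0 => /eqP.
have bE : b = (2 / c) *: a.
  apply: rdot_inj => y; rewrite rdotZr; have := H1 y; rewrite k0 subr0 => h.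
  by apply: (mulIf cz); rewrite h mulrAC divfK.
move=> y; rewrite bE k0 -(mulr0 (2 / c)) reflZ // ?mulr0 //.
by rewrite mulf_neq0 ?invr_eq0 ?pnatr_eq0.
Qed.

Lemma hyp_eq_normal (b : V) k (b' : V) c : b != 0 ->
  hyp b k = [set g | rdot g b' = c] -> exists l, b' = l *: b /\ c = l * k.
Proof.
move=> bz H.
have HH g : (rdot g b = k) = (rdot g b' = c) by exact: (congr1 (fun P => P g) H).
have bb := rdot_neq0 bz.
set p0 := (k / rdot b b) *: b.
have p0b : rdot p0 b = k by rewrite /p0 rdotZl divfK.
have p0c : rdot p0 b' = c by rewrite -HH.
set l := rdot b' b / rdot b b; set d := b' - l *: b.
have db : rdot d b = 0 by rewrite /d rdotBl rdotZl /l divfK // rdotC subrr.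
have dc : rdot d b' = 0.
  have : rdot (p0 + d) b' = c by rewrite -HH rdotDl p0b db addr0.
  by rewrite rdotDl p0c; lra.
have d0 : d = 0 by apply: rdot_eq0; rewrite {2}/d rdotBr dc rdotZr db mulr0 subr0.
have b'E : b' = l *: b by apply/eqP; rewrite -subr_eq0 -/d d0.
by exists l; split => //; rewrite -p0c b'E rdotZr p0b.
Qed.

End Pairing.

Section MarkovChains.
Variables (R : realType) (S : Type).

Definition mexpect (d : seq (S * R)) (F : S -> R) : R := \sum_(x <- d) x.2 * F x.1.

Lemma mexpect_cons x d F : mexpect (x :: d) F = x.2 * F x.1 + mexpect d F.
Proof. by rewrite /mexpect big_cons. Qed.

Lemma mexpect_nil F : mexpect [::] F = 0.
Proof. by rewrite /mexpect big_nil. Qed.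

Lemma mexpect_mstep (K : S -> seq (S * R)) d F :
  mexpect (mstep K d) F = mexpect d (fun s => mexpect (K s) F).
Proof.
rewrite /mexpect /mstep big_flatten /= big_map; apply: eq_bigr => x _.
by rewrite big_map mulr_sumr; apply: eq_bigr => y _; rewrite /= mulrA.
Qed.

Lemma mprob_mexpect d (P : S -> Prop) :
  mprob d P = mexpect d (fun s => if `[< P s >] then 1 else 0).
Proof. by apply: eq_bigr => x _; case: ifP; rewrite ?mulr1 ?mulr0. Qed.

End MarkovChains.

Lemma mdist_lump (R : realType) (S T : Type) (K : S -> seq (S * R))
    (L : T -> seq (T * R)) (f : S -> T) (s0 : S) (t0 : T)
    (inv : (T -> R) -> Prop) :
  (forall F, inv F -> inv (fun t => mexpect (L t) F)) ->
  (forall F, inv F -> F (f s0) = F t0) ->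
  (forall F s, inv F -> mexpect (K s) (F \o f) = mexpect (L (f s)) F) ->
  forall M F, inv F -> mexpect (mdist K s0 M) (F \o f) = mexpect (mdist L t0 M) F.
Proof.
move=> invL inv0 Kf; elim=> [|M IH] F invF.
  by rewrite /mdist /= !mexpect_cons !mexpect_nil !mul1r !addr0; apply: inv0.
rewrite /mdist !iterS !mexpect_mstep -IH; last exact: invL.
by congr mexpect; apply: funext => s; apply: Kf.
Qed.

Section Integers.
Variable R : realType.

Lemma intr_ge0_lt1 (m : int) : 0 <= (m%:~R : R) < 1 -> m = 0.
Proof. by case/andP; rewrite ler0z ltrz1; lia. Qed.

Lemma intr_gt0_le1 (m : int) : 0 < (m%:~R : R) <= 1 -> m = 1.
Proof. by case/andP; rewrite ltr0z lerz1; lia. Qed.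

Lemma intr_gtN1 (m : int) : (-1 : R) < m%:~R -> (0 <= m)%R.
Proof.
move=> h; have : (0 : R) < (m + 1)%:~R by rewrite intrD; lra.
by rewrite ltr0z; lia.
Qed.

Lemma psum_intr_mul_eq0 n (c : 'I_n -> int) (x : 'I_n -> R) :
  (forall l, 0 <= c l) -> (forall l, 0 <= x l) ->
  \sum_(l < n) (c l)%:~R * x l = 0 -> forall l, (c l)%:~R * x l = 0.
Proof.
move=> Hc Hx /eqP; rewrite psumr_eq0 => [/allP H l|l _].
  by apply/eqP; apply: H; rewrite mem_index_enum.
by apply: mulr_ge0 => //; rewrite ler0z.
Qed.

End Integers.

Section RootSystem.
Variables (R : realType) (n : nat).
Local Notation V := 'rV[R]_n.
Variables (Phi : seq V) (alpha : 'I_n -> V) (theta : V).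
Hypothesis HPhi : is_root_system Phi.
Hypothesis Hbase : is_base Phi alpha.
Hypothesis Htheta : is_highest_root Phi alpha theta.

Local Notation pos b := (pos_root Phi alpha b).
Local Notation neg b := (pos_root Phi alpha (- b)).

Definition rcomb (x : 'I_n -> R) : V := \sum_(l < n) x l *: alpha l.

Lemma zcombE c : zcomb alpha c = rcomb (fun l => (c l)%:~R).
Proof. by []. Qed.

Lemma rcomb_inj x y : rcomb x = rcomb y -> x =1 y.
Proof.
case: Hbase => _ Hfree _ H l; apply/eqP; rewrite -subr_eq0; apply/eqP.
apply: (Hfree (fun l => x l - y l)); rewrite /rcomb in H.
under eq_bigr do rewrite scalerBl.
by rewrite sumrB H subrr.
Qed.

Lemma alpha_rcomb j : alpha j = rcomb (fun l => (l == j)%:R).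
Proof.
rewrite /rcomb (bigD1 j) //= eqxx scale1r big1 ?addr0 // => l /negbTE ->.
by rewrite scale0r.
Qed.

Lemma rcomb0 : rcomb (fun _ => 0) = 0.
Proof. by rewrite /rcomb big1 // => l _; rewrite scale0r. Qed.

Lemma rcombD x y : rcomb x + rcomb y = rcomb (fun l => x l + y l).
Proof. by rewrite /rcomb -big_split; apply: eq_bigr => l _; rewrite scalerDl. Qed.

Lemma rcombZ a x : a *: rcomb x = rcomb (fun l => a * x l).
Proof. by rewrite /rcomb scaler_sumr; apply: eq_bigr => l _; rewrite scalerA. Qed.

Lemma rcombN x : - rcomb x = rcomb (fun l => - x l).
Proof. by rewrite -scaleN1r rcombZ; congr rcomb; apply: funext => l; rewrite mulN1r. Qed.

Lemma rdot_rcomb g x : rdot g (rcomb x) = \sum_(l < n) x l * rdot g (alpha l).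
Proof.
rewrite /rcomb; elim/big_rec2: _ => [|l a y _ <-]; first by rewrite rdot0r.
by rewrite rdotDr rdotZr.
Qed.

Lemma rcomb_single x j : (forall l, l != j -> x l = 0) -> rcomb x = x j *: alpha j.
Proof.
move=> Hx; rewrite alpha_rcomb rcombZ; congr rcomb; apply: funext => l.
by case: (eqVneq l j) => [->|lj]; rewrite ?eqxx ?mulr1 // Hx // mulr0.
Qed.

Lemma alpha_in j : alpha j \in Phi.
Proof. by case: Hbase. Qed.

Lemma root_neq0 b : b \in Phi -> b != 0.
Proof. by case: HPhi => H _ _ _ _; apply: H. Qed.

Lemma alpha_neq0 j : alpha j != 0.
Proof. exact/root_neq0/alpha_in. Qed.

Lemma root_refl0 a b : a \in Phi -> b \in Phi -> refl a 0 b \in Phi.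
Proof. by case: HPhi => _ _ H _ _; apply: H. Qed.

Lemma rootN b : b \in Phi -> - b \in Phi.
Proof. by move=> bP; rewrite -refl0_self ?root_neq0 // root_refl0. Qed.

Lemma rdot_coroot_int a b : a \in Phi -> b \in Phi ->
  exists z : int, rdot (coroot a) b = z%:~R.
Proof.
case: HPhi => _ _ _ H _ aP bP; have [z Hz] := H a b aP bP.
by exists z; rewrite rdot_coroot -Hz rdotC.
Qed.

Lemma root_reduced a b (c : R) : a \in Phi -> b \in Phi -> b = c *: a ->
  c = 1 \/ c = -1.
Proof. by case: HPhi => _ _ _ _ H; apply: H. Qed.

Lemma theta_pos : pos theta.
Proof. by case: Htheta. Qed.

Lemma theta_in : theta \in Phi.
Proof. by case: theta_pos. Qed.

Lemma theta_highest b : pos b -> exists d : 'I_n -> int,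
  theta - b = zcomb alpha d /\ forall i, 0 <= d i.
Proof. by case: Htheta => _; apply. Qed.

Lemma alpha_pos j : pos (alpha j).
Proof.
split; first exact: alpha_in.
exists (fun l => (l == j)%:R); split; last by move=> l; case: (l == j).
by rewrite zcombE alpha_rcomb; congr rcomb; apply: funext => l; case: (l == j).
Qed.

Lemma alpha_inj : injective alpha.
Proof.
move=> i j; rewrite !alpha_rcomb => /rcomb_inj /(_ i); rewrite eqxx.
by case: eqP => // _ /eqP; rewrite oner_eq0.
Qed.

Lemma pos_or_neg b : b \in Phi -> pos b \/ neg b.
Proof.
case: Hbase => _ _ H bP; have [c [Hb [Hc|Hc]]] := H b bP.
  by left; split => //; exists c.
right; split; first exact: rootN.
exists (fun l => - c l); split; last by move=> l; rewrite oppr_ge0.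
by rewrite Hb !zcombE rcombN; congr rcomb; apply: funext => l; rewrite intrN.
Qed.

Lemma pos_neg_false b : pos b -> neg b -> False.
Proof.
move=> [bP [c [Hb Hc]]] [_ [d [Hd Hd0]]].
have H : rcomb (fun l => (c l)%:~R + (d l)%:~R) = rcomb (fun _ => 0).
  by rewrite -rcombD -!zcombE -Hb -Hd subrr rcomb0.
have c0 l : (c l)%:~R = 0 :> R.
  have := rcomb_inj H l; have := Hc l; have := Hd0 l.
  rewrite -(ler0z R) -[0 <= c l](ler0z R); lra.
have : b = 0 by rewrite Hb zcombE -rcomb0; congr rcomb; apply: funext.
by apply/eqP/root_neq0.
Qed.

Lemma pos_coef_gt0 b : pos b -> exists c,
  [/\ b = zcomb alpha c, (forall i, 0 <= c i) & exists l, 0 < c l].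
Proof.
move=> [bP [c [Hb Hc]]]; exists c; split => //.
apply/not_existsP => H.
have : b = 0.
  rewrite Hb zcombE -rcomb0; congr rcomb; apply: funext => l.
  have := H l; have := Hc l; rewrite lt_def => ->; rewrite andbT.
  by move/negP; rewrite negbK => /eqP ->.
by apply/eqP/root_neq0.
Qed.

Lemma rdot_zcomb_ge0 (q : V) d : (forall j, 0 <= rdot q (alpha j)) ->
  (forall l, 0 <= d l) -> 0 <= rdot q (zcomb alpha d).
Proof.
move=> Hq Hd; rewrite zcombE rdot_rcomb.
by apply: sumr_ge0 => k _; apply: mulr_ge0 => //; rewrite ler0z.
Qed.

Lemma rdot_pos_ge0 (q : V) b : (forall j, 0 <= rdot q (alpha j)) -> pos b ->
  0 <= rdot q b.
Proof. by move=> Hq [_ [c [-> Hc]]]; apply: rdot_zcomb_ge0. Qed.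

Lemma rdot_neg_le0 (q : V) b : (forall j, 0 <= rdot q (alpha j)) -> neg b ->
  rdot q b <= 0.
Proof. by move=> Hq /(rdot_pos_ge0 Hq); rewrite rdotNr oppr_ge0. Qed.

Lemma rdot_pos_gt0 (q : V) b : (forall j, 0 < rdot q (alpha j)) -> pos b ->
  0 < rdot q b.
Proof.
move=> Hq /pos_coef_gt0 [c [-> Hc [l Hl]]].
rewrite zcombE rdot_rcomb (bigD1 l) //=.
apply: (@lt_le_trans _ _ ((c l)%:~R * rdot q (alpha l))).
  by apply: mulr_gt0 => //; rewrite ltr0z.
rewrite lerDl; apply: sumr_ge0 => k _; apply: mulr_ge0; last exact: ltW.
by rewrite ler0z.
Qed.

Lemma rdot_le_theta (q : V) b : (forall j, 0 <= rdot q (alpha j)) -> pos b ->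
  rdot q b <= rdot q theta.
Proof.
move=> Hq bp; have [d [Hd Hd0]] := theta_highest bp.
have := rdot_zcomb_ge0 Hq Hd0; rewrite -Hd rdotBr; lra.
Qed.

Lemma root_single b c j : b \in Phi -> b = zcomb alpha c -> (forall l, 0 <= c l) ->
  (forall l, l != j -> (c l)%:~R = 0 :> R) -> b = alpha j.
Proof.
move=> bP Hb Hc Hj; have bE : b = (c j)%:~R *: alpha j.
  by rewrite Hb zcombE; apply: rcomb_single.
have [c1|cm1] := root_reduced (alpha_in j) bP bE; first by rewrite bE c1 scale1r.
by exfalso; have := Hc j; rewrite -(ler0z R) cm1; lra.
Qed.

Lemma refl_simple_pos b j : pos b -> b != alpha j -> pos (refl (alpha j) 0 b).
Proof.
move=> bpos bne.
have sP : refl (alpha j) 0 b \in Phi by apply: root_refl0; [exact: alpha_in|case: bpos].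
have [//|sneg] := pos_or_neg sP.
exfalso; move: bpos sneg => [bP [c [Hb Hc]]] [_ [d [Hd Hd0]]].
set r := rdot (coroot (alpha j)) b.
have E : rcomb (fun l => (c l)%:~R + (d l)%:~R) = rcomb (fun l => r * (l == j)%:R).
  rewrite -rcombD -!zcombE -Hb -Hd refl0E opprB addrCA subrr addr0.
  by rewrite -/r (alpha_rcomb j) rcombZ.
apply: (negP bne); apply/eqP; apply: (root_single bP Hb Hc) => l lj; have := rcomb_inj E l.
rewrite (negbTE lj) mulr0; have := Hc l; have := Hd0 l.
rewrite -(ler0z R) -[0 <= c l](ler0z R); lra.
Qed.

Lemma rdot_coroot_simple_le0 i j : i != j -> rdot (coroot (alpha j)) (alpha i) <= 0.
Proof.
move=> ij; have ne : alpha i != alpha j by apply: contra ij => /eqP/alpha_inj ->.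
have [_ [d [Hd Hd0]]] := refl_simple_pos (alpha_pos i) ne.
move: Hd; rewrite refl0E zcombE (alpha_rcomb i) (alpha_rcomb j) rcombZ rcombN rcombD.
move/esym/rcomb_inj/(_ j); rewrite eqxx (eq_sym j i) (negbTE ij) mulr1 add0r.
have := Hd0 j; rewrite -(ler0z R); lra.
Qed.

Lemma theta_dominant j : 0 <= rdot (coroot (alpha j)) theta.
Proof.
have [->|ne] := eqVneq theta (alpha j).
  by rewrite rdot_coroot_self ?alpha_neq0 // ler0n.
have [d [Hd Hd0]] := theta_highest (refl_simple_pos theta_pos ne).
move: Hd; rewrite refl0E opprB addrCA subrr addr0 zcombE alpha_rcomb rcombZ.
by move/rcomb_inj/(_ j); rewrite eqxx mulr1 => ->; rewrite ler0z.
Qed.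

Local Notation A := (Afund alpha theta).
Local Notation C := (Cone alpha).
Local Notation act := (act alpha theta).
Local Notation sgen := (Defs.sgen alpha theta).
Local Notation alcove := (Defs.alcove alpha theta).
Local Notation wact w := (act (map Some w)).

Lemma Afund_rdot_pos g b : A g -> pos b -> 0 <= rdot g b <= 1.
Proof.
move=> [Hg Hgt] bp; apply/andP; split; first exact: rdot_pos_ge0 Hg bp.
exact: le_trans (rdot_le_theta Hg bp) Hgt.
Qed.

Lemma Afund_rdot_root g b : A g -> b \in Phi -> -1 <= rdot g b <= 1.
Proof.
move=> gA bP; have [/(Afund_rdot_pos gA)|/(Afund_rdot_pos gA)] := pos_or_neg bP.
  lra.
rewrite rdotNr; lra.
Qed.

Lemma Afund_level_between g q b (m : int) : A g -> A q -> b \in Phi ->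
  rdot g b - m%:~R < 0 -> 0 <= rdot q b - m%:~R -> rdot q b = m%:~R.
Proof.
move=> gA qA bP h2 h1.
have /andP[b1 b2] := Afund_rdot_root gA bP.
have /andP[b3 b4] := Afund_rdot_root qA bP.
have m0 : (0 <= m)%R by apply: intr_gtN1; lra.
have [hm|hm] := ltP 0 m.
  have : (1 : R) <= m%:~R by rewrite ler1z; lia.
  lra.
have m00 : m = 0 by lia.
move: h1 h2; rewrite m00 !subr0 => h1 h2.
have [bp|bn] := pos_or_neg bP.
  by have := Afund_rdot_pos gA bp => /andP[]; lra.
by have := Afund_rdot_pos qA bn => /andP[]; rewrite rdotNr; lra.
Qed.

Definition wall_root (s : option 'I_n) : V := if s is Some j then alpha j else theta.
Definition wall_level (s : option 'I_n) : int := if s is Some _ then 0 else 1.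

Lemma sgenE s : sgen s =1 refl (wall_root s) (wall_level s)%:~R.
Proof. by case: s. Qed.

Lemma wallE s : wall alpha theta s = hyp (wall_root s) (wall_level s)%:~R.
Proof. by case: s. Qed.

Lemma wall_root_in s : wall_root s \in Phi.
Proof. by case: s => [j|]; [exact: alpha_in|exact: theta_in]. Qed.

Lemma wall_root_neq0 s : wall_root s != 0.
Proof. exact/root_neq0/wall_root_in. Qed.

Lemma sgenK s : involutive (sgen s).
Proof. by move=> g; rewrite !sgenE reflK // wall_root_neq0. Qed.

Lemma act_cons a u g : act (a :: u) g = act u (sgen a g).
Proof. by []. Qed.

Lemma act_cat u1 u2 g : act (u1 ++ u2) g = act u2 (act u1 g).
Proof. by rewrite /Defs.act foldl_cat. Qed.

Lemma act_revK v : cancel (act v) (act (rev v)).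
Proof.
elim: v => [//|a v IH] g.
by rewrite act_cons rev_cons -cats1 act_cat IH /= sgenK.
Qed.

Lemma act_Krev v : cancel (act (rev v)) (act v).
Proof. by move=> y; rewrite -{1}(revK v) act_revK. Qed.

Lemma rdot_wact w y c : rdot (wact w y) c = rdot y (wact (rev w) c).
Proof.
elim: w y c => [//|j w IH] y c.
by rewrite map_cons act_cons IH rdot_refl0 rev_cons -cats1 map_cat act_cat.
Qed.

Lemma wact_root w b : b \in Phi -> wact w b \in Phi.
Proof.
elim: w b => [//|j w IH] b bP; rewrite map_cons act_cons; apply: IH.
exact: root_refl0 (alpha_in j) bP.
Qed.

Lemma sgen_refl a b k g : b != 0 ->
  sgen a (refl b k g) =
  refl (refl (wall_root a) 0 b)
       (k - (if a is None then rdot (coroot theta) b else 0)) (sgen a g).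
Proof.
move=> bz; have tz : theta != 0 by have := wall_root_neq0 None.
case: a => [j|] /=; first by rewrite subr0 refl0_refl // alpha_neq0.
rewrite !(refl_affine theta _ 1) scale1r refl0_refl //.
set b' := refl theta 0 b; set h := refl theta 0 g.
rewrite /refl rdotDl; have -> : rdot (coroot theta) b' = - rdot (coroot theta) b.
  by rewrite /b' -rdot_refl0 refl0_coroot_self // rdotNl.
rewrite [RHS]addrAC; congr (_ - _ *: _ + _); ring.
Qed.

Lemma act_refl u b k : b != 0 -> exists b' k', b' != 0 /\
  forall g, act u (refl b k g) = refl b' k' (act u g).
Proof.
elim: u b k => [|a u IH] b k bz; first by exists b, k.
have bz' : refl (wall_root a) 0 b != 0 by rewrite refl0_eq0 // wall_root_neq0.
have [b' [k' [bz'' H]]] := IH _ (k - (if a is None then rdot (coroot theta) b else 0)) bz'.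
by exists b', k'; split => // g; rewrite !act_cons sgen_refl // H.
Qed.

Lemma act_root_level u b (k : int) : b \in Phi -> exists b' (m : int), b' \in Phi /\
  forall g, rdot (act u g) b - k%:~R = rdot g b' - m%:~R.
Proof.
elim: u b k => [|a u IH] b k bP; first by exists b, k.
have [g1 [m1 [g1P H]]] := IH b k bP.
case: a => [j|].
  exists (refl (alpha j) 0 g1), m1; split; first exact: root_refl0 (alpha_in j) g1P.
  by move=> g; rewrite act_cons H /= rdot_refl0.
have [z Hz] := rdot_coroot_int theta_in g1P.
exists (refl theta 0 g1), (m1 - z); split; first exact: root_refl0 theta_in g1P.
move=> g; rewrite act_cons H /= refl_affine rdotDl rdot_refl0 rdotZl mul1r Hz intrB.
ring.
Qed.

Lemma Hsep_level v s g0 (m : int) :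
  (forall y, rdot (act (rev v) y) (wall_root s) - (wall_level s)%:~R = rdot y g0 - m%:~R) ->
  Hsep alpha theta v s = hyp g0 m%:~R.
Proof.
move=> H; rewrite /Hsep wallE; apply/seteqP; split => y /=.
  case=> g gW <-; have := H (act v g); rewrite act_revK.
  by move: gW; rewrite /hyp /= => ->; lra.
move=> hy; exists (act (rev v) y); last exact: act_Krev.
by rewrite /hyp /=; have := H y; rewrite hy subrr; lra.
Qed.

Lemma wact_cons j w g : wact (j :: w) g = wact w (refl (alpha j) 0 g).
Proof. by []. Qed.

Lemma wact_rcons w j g : wact (rcons w j) g = refl (alpha j) 0 (wact w g).
Proof. by rewrite -cats1 map_cat act_cat. Qed.

(** The deletion condition of Coxeter groups. *)
Lemma wact_refl_shorter w b : pos b -> neg (wact w b) ->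
  exists w', (size w' < size w)%N /\ forall y, wact w (refl b 0 y) = wact w' y.
Proof.
elim: w b => [|j w IH] b bp bn; first by case: (pos_neg_false bp bn).
have [->|ne] := eqVneq b (alpha j).
  by exists w; split => // y; rewrite wact_cons reflK // alpha_neq0.
have [w' [Hs Hw]] := IH _ (refl_simple_pos bp ne) bn.
exists (j :: w'); split => // y.
by rewrite !wact_cons refl0_refl ?alpha_neq0 // Hw.
Qed.

Lemma wact_chamber_id w q : (forall j, 0 < rdot q (alpha j)) ->
  (forall j, 0 <= rdot (wact w q) (alpha j)) -> wact w =1 id.
Proof.
move=> Hq; have [m] := ubnP (size w); elim: m w => // m IH.
case/lastP => [//|w i] Hs HG y.
have h : rdot q (wact (rev w) (alpha i)) <= 0.
  have := HG i; rewrite wact_rcons rdot_refl0 refl0_self ?alpha_neq0 // rdotNr.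
  by rewrite rdot_wact oppr_ge0.
have dn : neg (wact (rev w) (alpha i)).
  have [dp|//] := pos_or_neg (wact_root (rev w) (alpha_in i)).
  by have := rdot_pos_gt0 Hq dp; rewrite ltNge h.
have [w' [Hsz Hw']] := wact_refl_shorter (alpha_pos i) dn.
have E z : wact (rcons w i) z = wact (rev w') z.
  apply: rdot_inj => c.
  by rewrite !(rdotC c) wact_rcons rdot_refl0 !rdot_wact Hw' revK.
rewrite E; apply: IH => [|j]; last by rewrite -E; exact: HG.
by move: Hs Hsz; rewrite !size_rev size_rcons; lia.
Qed.

Variable z0 : V.
Hypothesis Hz0 : forall j, 0 < rdot z0 (alpha j).
Hypothesis Hz0t : rdot z0 theta < 1.

Lemma Afund_z0 : A z0.
Proof. by split; [move=> j; apply: ltW|apply: ltW]. Qed.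

Lemma z0_rdot_pos b : pos b -> 0 < rdot z0 b < 1.
Proof.
move=> bp; apply/andP; split; first exact: rdot_pos_gt0 Hz0 bp.
exact: le_lt_trans (rdot_le_theta (fun j => ltW (Hz0 j)) bp) Hz0t.
Qed.

Lemma z0_rdot_root b : b \in Phi -> -1 < rdot z0 b < 1.
Proof.
move=> bP; have [/z0_rdot_pos|/z0_rdot_pos] := pos_or_neg bP; rewrite ?rdotNr; lra.
Qed.

Lemma z0_rdot_notint b (m : int) : b \in Phi -> rdot z0 b != m%:~R.
Proof.
move=> bP; apply/eqP => E.
have [/z0_rdot_pos|/z0_rdot_pos] := pos_or_neg bP; rewrite ?rdotNr E -?intrN.
  by rewrite ltr0z ltrz1; lia.
by rewrite ltr0z ltrz1; lia.
Qed.

Lemma pos_root_simple_wall q j g : (forall l, 0 <= rdot q (alpha l)) ->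
  (forall l, l != j -> 0 < rdot q (alpha l)) ->
  pos g -> rdot q g = 0 -> g = alpha j.
Proof.
move=> qge qgt [gP [c [Hg Hc]]] E.
rewrite Hg zcombE rdot_rcomb in E; have H0 := psum_intr_mul_eq0 Hc qge E.
apply: (root_single gP Hg Hc) => l lj.
by have /eqP := H0 l; rewrite mulf_eq0 (gt_eqF (qgt l lj)) orbF => /eqP.
Qed.

Lemma pos_root_affine_wall q g : (forall l, 0 < rdot q (alpha l)) ->
  rdot q theta = 1 -> pos g -> rdot q g = 1 -> g = theta.
Proof.
move=> qgt qt gp E; have [d [Hd Hd0]] := theta_highest gp.
have : rdot q (theta - g) = 0 by rewrite rdotBr qt E subrr.
rewrite Hd zcombE rdot_rcomb => /(psum_intr_mul_eq0 Hd0 (fun l => ltW (qgt l))) H0.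
apply/eqP; rewrite eq_sym -subr_eq0 Hd zcombE -rcomb0; apply/eqP.
congr rcomb; apply: funext => l.
by have /eqP := H0 l; rewrite mulf_eq0 (gt_eqF (qgt l)) orbF => /eqP.
Qed.

(** The witness is the orthogonal projection of [z0] onto [H_{a_j}^0]. *)
Lemma simple_wall_point j : exists q, [/\ A q, sgen (Some j) q = q &
  forall g (m : int), pos g -> rdot q g = m%:~R -> g = alpha j /\ m = 0].
Proof.
set q := z0 - (rdot z0 (alpha j) / 2) *: coroot (alpha j).
have qa l : rdot q (alpha l) =
    rdot z0 (alpha l) - rdot z0 (alpha j) / 2 * rdot (coroot (alpha j)) (alpha l).
  by rewrite /q rdotBl rdotZl.
have qj : rdot q (alpha j) = 0 by rewrite qa rdot_coroot_self ?alpha_neq0 //; field.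
have qgt l : l != j -> 0 < rdot q (alpha l).
  move=> lj; rewrite qa; have := rdot_coroot_simple_le0 lj; have := Hz0 l.
  have := Hz0 j; nra.
have qge l : 0 <= rdot q (alpha l).
  by have [->|/qgt/ltW //] := eqVneq l j; rewrite qj.
have qt : rdot q theta < 1.
  have := theta_dominant j; have := Hz0 j; rewrite /q rdotBl rdotZl.
  by move: Hz0t; nra.
exists q; split; first by split => //; exact: ltW.
  by rewrite /= /refl qj subrr scale0r subr0.
move=> g m gp E; have m0 : m = 0.
  apply: (@intr_ge0_lt1 R); rewrite -E (rdot_pos_ge0 qge gp) /=.
  exact: le_lt_trans (rdot_le_theta qge gp) qt.
by split => //; apply: (pos_root_simple_wall qge qgt gp); rewrite E m0.
Qed.

(** The witness is the central projection of [z0] onto [H_theta^1]. *)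
Lemma affine_wall_point : exists q, [/\ A q, sgen None q = q &
  forall g (m : int), pos g -> rdot q g = m%:~R -> g = theta /\ m = 1].
Proof.
have tp : 0 < rdot z0 theta by apply: rdot_pos_gt0 Hz0 theta_pos.
set q := (rdot z0 theta)^-1 *: z0.
have qgt l : 0 < rdot q (alpha l) by rewrite /q rdotZl mulr_gt0 ?invr_gt0.
have qt : rdot q theta = 1 by rewrite /q rdotZl mulVf ?gt_eqF.
exists q; split.
- by split; [move=> l; exact: ltW|rewrite qt].
- by rewrite /= /refl qt subrr scale0r subr0.
move=> g m gp E; have m1 : m = 1.
  apply: (@intr_gt0_le1 R); rewrite -E (rdot_pos_gt0 qgt gp) /= -qt.
  by apply: rdot_le_theta gp => l; exact: ltW.
by split => //; apply: (pos_root_affine_wall qgt qt gp); rewrite E m1.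
Qed.

Lemma wall_point s : exists q, [/\ A q, sgen s q = q &
  forall g (m : int), g \in Phi -> rdot q g = m%:~R ->
    (g = wall_root s /\ m = wall_level s) \/ (g = - wall_root s /\ m = - wall_level s)].
Proof.
suff [q [qA qs H]] : exists q, [/\ A q, sgen s q = q & forall g (m : int),
    pos g -> rdot q g = m%:~R -> g = wall_root s /\ m = wall_level s].
  exists q; split => // g m gP E.
  have [gp|gn] := pos_or_neg gP; first by left; apply: H.
  right; have [] := H _ (- m) gn; first by rewrite rdotNr E intrN.
  by move=> <- <-; rewrite !opprK.
by case: s => [j|]; [exact: simple_wall_point|exact: affine_wall_point].
Qed.

Lemma separates_Afund b (m : int) (X : set V) : b \in Phi -> m != 0 ->
  separates (hyp b m%:~R) X A <-> (forall x, X x -> 0 <= m%:~R * (rdot x b - m%:~R)).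
Proof.
move=> bP mz; have bz := root_neq0 bP; set mr : R := m%:~R.
have mr1 : 1 <= mr \/ mr <= -1.
  rewrite /mr; have [h|h] := ltP 0 m; first by left; rewrite ler1z; lia.
  by right; rewrite -(mulrN1z 1) ler_int; lia.
split.
- move=> [b' [c [b'z Hh HX HY]]]; have [l [b'E cE]] := hyp_eq_normal bz Hh.
  have lz : l != 0 by apply: contraNneq b'z => l0; rewrite b'E l0 scale0r.
  have := HY z0 Afund_z0; rewrite /= b'E rdotZr cE => hz.
  have /andP[h1 h2] := z0_rdot_root bP.
  move=> x /HX; rewrite /= b'E rdotZr cE => hx.
  have : l < 0 \/ 0 < l by move: lz; rewrite neq_lt => /orP.
  by case: mr1 => Hm [hl|hl]; nra.
- move=> H; exists (- mr *: b), (- (mr * mr)); split.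
  + by rewrite scaler_eq0 negb_or oppr_eq0 /mr intr_eq0 mz bz.
  + apply/seteqP; split => g /=; rewrite rdotZr /mr => h; first by rewrite h mulNr.
    have : mr * (rdot g b - mr) = 0 by rewrite /mr; lra.
    by move/eqP; rewrite mulf_eq0 intr_eq0 (negbTE mz) /= subr_eq0 => /eqP.
  + by move=> x /H; rewrite /= rdotZr -/mr; lra.
  + move=> g /Afund_rdot_root /(_ bP); rewrite /= rdotZr -/mr => h.
    by case: mr1 => Hm; nra.
Qed.

(** If [A v] lies in [C] but [A s v] does not, they are separated by a wall
  [H_{a_j}^0] of [C], which therefore is the image of the wall of [s]. *)
Lemma act_cons_flip v s : alcove v `<=` C -> ~ (alcove (s :: v) `<=` C) ->
  exists j, forall g, rdot (act v (sgen s g)) (alpha j) = - rdot (act v g) (alpha j).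
Proof.
move=> Hv Hsv.
have [g1 g1A Cg1] : exists2 g1, A g1 & ~ C (act (s :: v) g1).
  have [y /not_implyP [[g1 g1A <-] Cy]] : exists y, ~ (alcove (s :: v) y -> C y).
    exact/existsNP.
  by exists g1.
have [j Hj] : exists j, rdot (act (s :: v) g1) (alpha j) < 0.
  have [j Hj] : exists j, ~ (0 <= rdot (act (s :: v) g1) (alpha j)) by apply/existsNP.
  by exists j; rewrite ltNge; apply/negP.
have [gam [m [gP Hf]]] := act_root_level (s :: v) 0 (alpha_in j).
have [q [qA qs Hq]] := wall_point s.
have qm : rdot q gam = m%:~R.
  apply: (Afund_level_between g1A qA gP); first by rewrite -Hf mulr0z subr0.
  by rewrite -Hf mulr0z subr0 act_cons qs; apply: Hv; exists q.
have [eps Heps] : exists eps : R, forall g,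
    rdot g gam - m%:~R = eps * (rdot g (wall_root s) - (wall_level s)%:~R).
  have [[-> ->]|[-> ->]] := Hq gam m gP qm; first by exists 1 => g; rewrite mul1r.
  by exists (-1) => g; rewrite rdotNr intrN; ring.
exists j => g; have e1 := Hf g; have e2 := Hf (sgen s g).
rewrite !act_cons sgenK in e1 e2; rewrite Heps in e1; rewrite Heps in e2.
move: e1 e2; rewrite sgenE rdot_refl_self ?wall_root_neq0 // mulr0z !subr0 => -> ->.
by rewrite mulrN opprK.
Qed.

Lemma act_cons_refl_simple v s : alcove v `<=` C -> ~ (alcove (s :: v) `<=` C) ->
  exists j, forall g, act v (sgen s g) = refl (alpha j) 0 (act v g).
Proof.
move=> Hv Hsv; have [j Hj] := act_cons_flip Hv Hsv.
have [b' [k' [b'z Hc]]] := act_refl v (wall_level s)%:~R (wall_root_neq0 s).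
have Hr : refl b' k' =1 refl (alpha j) 0.
  apply: refl_eq_refl0 => //; first exact: alpha_neq0.
  by move=> y; rewrite -(act_Krev v y) -Hc -sgenE Hj.
by exists j => g; rewrite sgenE Hc Hr.
Qed.

Local Notation hr := (is_hat_rep alpha theta).
Local Notation weq := (weq alpha theta).

Lemma act_z0_gt0 v : alcove v `<=` C -> forall j, 0 < rdot (act v z0) (alpha j).
Proof.
move=> Hv j; have Cz : C (act v z0) by apply: Hv; exists z0 => //; exact: Afund_z0.
have [g0 [m [gP H]]] := act_root_level v 0 (alpha_in j).
have nz : rdot (act v z0) (alpha j) != 0.
  by have := H z0; rewrite mulr0z subr0 => ->; rewrite subr_eq0 z0_rdot_notint.
by rewrite lt_def nz Cz.
Qed.

Lemma hat_rep_unique u x v : hr u x -> hr u v -> weq x v.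
Proof.
move=> [Hx [w1 E1]] [Hv [w2 E2]] g.
have Ex h : act x h = wact (rev w2 ++ w1) (act v h).
  by rewrite map_cat act_cat map_rev E2 act_cat act_revK E1 act_cat.
rewrite Ex (wact_chamber_id (act_z0_gt0 Hv)) // => j; rewrite -Ex.
by apply: Hx; exists z0 => //; exact: Afund_z0.
Qed.

Lemma hat_rep_nil : hr [::] [::].
Proof. by split; [move=> y [g [gA _] <-]|exists [::]]. Qed.

Lemma hat_rep_cons_in u v s : hr u v -> alcove (s :: v) `<=` C -> hr (s :: u) (s :: v).
Proof. by move=> [_ [w E]] Hc; split => //; exists w => g; rewrite act_cons E. Qed.

Lemma hat_rep_cons_out u v s : hr u v -> ~ (alcove (s :: v) `<=` C) -> hr (s :: u) v.
Proof.
move=> [Hv [w E]] Hn; have [j Hj] := act_cons_refl_simple Hv Hn; split => //.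
exists (rcons w j) => g; rewrite map_rcons -cats1 catA act_cat cat_cons.
by rewrite [act (s :: _) g]act_cons -E Hj /= reflK // alpha_neq0.
Qed.

Lemma hat_rep_exists u : exists v, hr u v.
Proof.
elim: u => [|s u [v Hv]]; first by exists [::]; exact: hat_rep_nil.
have [Hc|Hc] := pselect (alcove (s :: v) `<=` C).
  by exists (s :: v); exact: hat_rep_cons_in.
by exists v; exact: hat_rep_cons_out.
Qed.

Definition hat_of u : seq (option 'I_n) := proj1_sig (cid (hat_rep_exists u)).

Lemma hat_ofP u : hr u (hat_of u).
Proof. exact: proj2_sig (cid (hat_rep_exists u)). Qed.

Lemma weq_sym a b : weq a b -> weq b a.
Proof. by move=> H g; rewrite H. Qed.

Lemma weq_trans a b c : weq a b -> weq b c -> weq a c.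
Proof. by move=> H1 H2 g; rewrite H1 H2. Qed.

Lemma weq_cons s a b : weq a b -> weq (s :: a) (s :: b).
Proof. by move=> H g; rewrite !act_cons H. Qed.

Lemma hat_rep_weq u v x : hr u v -> weq v x -> hr u x.
Proof.
move=> [Hv [w E]] H; have Ex : act x = act v by apply: funext => g; rewrite H.
by split; [rewrite /Defs.alcove Ex|exists w; apply: weq_trans (weq_sym H) E].
Qed.

Lemma hat_of_eq u x : weq (hat_of u) x <-> hr u x.
Proof.
split; first exact: hat_rep_weq (hat_ofP u).
exact: hat_rep_unique (hat_ofP u).
Qed.

(** For a linear hyperplane [H_g0^0], the points [v z0] and [v s z0] of [C]
  would lie on the same side, while [H^{(v,s)}] separates them. *)
Lemma Hsep_level_neq0 v s g0 (m : int) : alcove v `<=` C ->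
  alcove (s :: v) `<=` C -> g0 \in Phi ->
  (forall y, rdot (act (rev v) y) (wall_root s) - (wall_level s)%:~R = rdot y g0 - m%:~R) ->
  m != 0.
Proof.
move=> Hv Hsv gP Hm; apply/eqP => m0; move: Hm; rewrite m0 mulr0z => Hm.
have e1 := Hm (act v z0); have e2 := Hm (act v (sgen s z0)).
rewrite act_revK in e1; rewrite act_revK sgenE rdot_refl_self ?wall_root_neq0 // in e2.
have /eqP nz := z0_rdot_notint (wall_level s) (wall_root_in s).
have C1 : C (act v z0) by apply: Hv; exists z0 => //; exact: Afund_z0.
have C2 : C (act v (sgen s z0)) by apply: Hsv; exists z0 => //; exact: Afund_z0.
rewrite sgenE in C2; move: e1 e2 nz; rewrite !subr0.
have [gp|gn] := pos_or_neg gP.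
  by have := rdot_pos_ge0 C1 gp; have := rdot_pos_ge0 C2 gp; lra.
by have := rdot_neg_le0 C1 gn; have := rdot_neg_le0 C2 gn; lra.
Qed.

Local Notation sep u s := (separates (Hsep alpha theta u s) (alcove u) A).

Lemma separates_hat_rep u v s : hr u v -> alcove (s :: v) `<=` C ->
  (sep u s <-> sep v s).
Proof.
move=> [Hv [w E]] Hsv.
have [g0 [m [gP Hm]]] := act_root_level (rev v) (wall_level s) (wall_root_in s).
have m0 := Hsep_level_neq0 Hv Hsv gP Hm.
have Hu y : rdot (act (rev u) y) (wall_root s) - (wall_level s)%:~R =
    rdot y (wact (rev w) g0) - m%:~R.
  have -> : act (rev u) y = act (rev v) (wact w y).
    by rewrite -[act (rev u) y](act_revK v) E act_cat act_Krev.
  by rewrite Hm rdot_wact.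
have Kg g : rdot (act u g) (wact (rev w) g0) = rdot (act v g) g0.
  by rewrite -rdot_wact E act_cat.
rewrite (Hsep_level Hu) (Hsep_level Hm) !separates_Afund ?wact_root //.
by split => H x [g gA <-]; [rewrite -Kg|rewrite Kg]; apply: H; exists g.
Qed.

Variables (i : nat -> option 'I_n) (N : nat) (p : R).

Local Notation Kt := (tilde_kernel alpha theta i N p).
Local Notation Kh := (hat_kernel alpha theta i N p).

Definition weq_invariant (F : state n -> R) :=
  forall a b k, weq a b -> F (a, k) = F (b, k).

Definition hat_state (x : state n) : state n := (hat_of x.1, x.2).

Lemma hat_kernel_weq F : weq_invariant F -> weq_invariant (fun t => mexpect (Kh t) F).
Proof.
move=> HF a b k H; rewrite /hat_kernel /=.
have E1 : act a = act b by apply: funext.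
have E2 : act (i k :: a) = act (i k :: b) by apply: funext; apply: weq_cons.
rewrite /Defs.alcove /Hsep E1 E2.
case: asboolP => _; rewrite !mexpect_cons ?mexpect_nil /= (HF _ _ _ H) //.
by rewrite (HF _ _ _ (weq_cons _ H)).
Qed.

Lemma tilde_kernel_lump F x : weq_invariant F ->
  mexpect (Kt x) (F \o hat_state) = mexpect (Kh (hat_state x)) F.
Proof.
case: x => u k HF; have Hv := hat_ofP u; set v := hat_of u in Hv *.
rewrite /tilde_kernel /hat_kernel /hat_state /= -/v.
set s := i k.
case: asboolP => Ht; case: asboolP => Hh; rewrite !mexpect_cons ?mexpect_nil /=.
- by case: Hh => Hns Hc; case: Hns; apply/(separates_hat_rep Hv Hc).
- by [].
- case: Hh => _ Hc; rewrite (HF _ (s :: v)) //.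
  by apply/hat_of_eq; apply: hat_rep_cons_in.
have [Hc|Hc] := pselect (alcove (s :: v) `<=` C).
  by case: Ht; apply/(separates_hat_rep Hv Hc); apply: contrapT => Hn; apply: Hh.
by rewrite (HF _ v) //; [ring|apply/hat_of_eq; apply: hat_rep_cons_out].
Qed.

End RootSystem.

Theorem lemma3p1 (R : realType) (n : nat) (Phi : seq 'rV[R]_n)
  (alpha : 'I_n -> 'rV[R]_n) (theta z0 eta : 'rV[R]_n) (p : R)
  (i : nat -> option 'I_n) (N : nat) :
  is_root_system Phi -> irreducible_rs Phi -> is_base Phi alpha ->
  is_highest_root Phi alpha theta ->
  (forall j, 0 < rdot z0 (alpha j)) -> rdot z0 theta < 1 ->
  0 < p < 1 ->
  in_Upsilon Phi alpha z0 eta ->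
  ray_alcove_seq alpha theta z0 eta i ->
  is_min_period i N ->
  forall (M : nat) (x : seq (option 'I_n)),
    mprob (mdist (hat_kernel alpha theta i N p) ([::], 0%N) M)
          (fun s => weq alpha theta s.1 x)
    = mprob (mdist (tilde_kernel alpha theta i N p) ([::], 0%N) M)
          (fun s => is_hat_rep alpha theta s.1 x).
Proof.
move=> HPhi _ Hbase Htheta Hz0 Hz0t _ _ _ _ M x.
pose hat := hat_state HPhi Hbase Htheta Hz0 Hz0t.
pose F (t : state n) : R := if `[< weq alpha theta t.1 x >] then 1 else 0.
have invF : weq_invariant alpha theta F.
  move=> a b k ab; rewrite /F /=; congr (if `[< _ >] then _ else _).
  by apply: propext; split=> E; [exact: weq_trans (weq_sym ab) E|exact: weq_trans ab E].
rewrite !mprob_mexpect.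
rewrite -(mdist_lump (K := tilde_kernel alpha theta i N p) (f := hat) (s0 := ([::], 0%N))
  _ _ _ M invF).
- congr mexpect; apply: funext => -[u k] /=; rewrite /F /=.
  by congr (if `[< _ >] then _ else _); apply: propext; apply: hat_of_eq.
- exact: hat_kernel_weq.
- move=> G invG; apply: invG; exact/hat_of_eq/hat_rep_nil.
- by move=> G s invG; apply: tilde_kernel_lump.
Qed.
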